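(* For $\varepsilon\geq0$, $\mathsf S_\varepsilon$ is an endofunctor of the category of $n$-parameter persistence modules, and for every $n$-parameter persistence module $M$, $d_I(M,\mathsf S_\varepsilon(M))\leq\varepsilon$.
   Context: An $n$-parameter persistence module is a functor $M:(\mathbb{R}^n,\leq)\to\mathbf{Vect}$ (equivalently an $\mathbb{R}^n$-graded module over the monoid ring of $([0,\infty)^n,+)$). The internal translation $\varphi^M_\varepsilon$ is the morphism $M\to M\circ T_\varepsilon$ given at $\vec a$ by $M(\vec a\leq\vec a+\varepsilon\vec1)$, where $T_\varepsilon(\vec a)=\vec a+\varepsilon\vec1$, $\vec1=(1,\dots,1)$ (equivalently, multiplication by $\vec x^{\varepsilon\vec1}$). The $\varepsilon$-simplification is $\mathsf S_\varepsilon(M)=(\mathrm{Im}\,\varphi^M_\varepsilon)\circ T_\varepsilon$, i.e. $\mathsf S_\varepsilon(M)_{\vec a}=\mathrm{Im}(M_{\vec a}\to M_{\vec a+\varepsilon\vec1})$. $M,N$ are $\varepsilon$-interleaved if there are natural maps $M_{\vec a}\to N_{\vec a+\varepsilon\vec1}$, $N_{\vec a}\to M_{\vec a+\varepsilon\vec1}$ whose composites are the internal maps shifting by $2\varepsilon\vec1$; $d_I$ is the infimum of such $\varepsilon$. *)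

From HB Require Import structures.
From mathcomp Require Import all_boot all_order all_algebra.
From mathcomp Require Import boolp classical_sets reals constructive_ereal ereal.
Set Implicit Arguments. Unset Strict Implicit. Unset Printing Implicit Defensive.
Import Order.TTheory GRing.Theory Num.Theory.
Local Open Scope ring_scope.

Definition imp (K : fieldType) (U V : lmodType K) (f : U -> V) : pred V :=
  fun y => `[< exists x, f x = y >].

Lemma imp_closed (K : fieldType) (U V : lmodType K) (f : U -> V) (fl : linear f) :
  subsemimod_closed (imp f).
Proof.
pose F : {linear U -> V} := HB.pack f (GRing.isLinear.Build K U V *:%R f fl).
apply: GRing.submod_closed_semi; split.
  by apply/asboolP; exists 0; exact: (linear0 F).
move=> a u v /asboolP[x <-] /asboolP[y <-]; apply/asboolP.
by exists (a *: x + y); exact: fl.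
Qed.

Definition imT (K : fieldType) (U V : lmodType K) (f : U -> V) (fl : linear f) :=
  {y : V | imp f y}.
HB.instance Definition _ (K : fieldType) (U V : lmodType K) (f : U -> V) (fl : linear f) :=
  [isSub for (@sval V (imp f)) : imT fl -> V].
HB.instance Definition _ (K : fieldType) (U V : lmodType K) (f : U -> V) (fl : linear f) :=
  [Choice of imT fl by <:].
HB.instance Definition _ (K : fieldType) (U V : lmodType K) (f : U -> V) (fl : linear f) :=
  GRing.SubChoice_isSubLmodule.Build K V (imp f) (imT fl) (imp_closed fl).

Definition leP (R : realType) (n : nat) (a b : 'I_n -> R) : bool :=
  [forall i, a i <= b i].

Definition sh (R : realType) (n : nat) (e : R) (a : 'I_n -> R) : 'I_n -> R :=
  fun i => a i + e.

Lemma leP_sh (R : realType) (n : nat) (e : R) (a : 'I_n -> R) :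
  0 <= e -> leP a (sh e a).
Proof. by move=> he; apply/forallP => i; rewrite /sh lerDl. Qed.

Lemma leP_shsh (R : realType) (n : nat) (e : R) (a b : 'I_n -> R) :
  leP a b -> leP (sh e a) (sh e b).
Proof. by move=> /forallP h; apply/forallP => i; rewrite /sh lerD2r. Qed.

Record pmod (K : fieldType) (R : realType) (n : nat) := PMod {
  pobj : ('I_n -> R) -> lmodType K;
  pmap : forall a b : 'I_n -> R, leP a b -> pobj a -> pobj b;
  pmap_lin : forall a b (h : leP a b), linear (pmap h);
  pmap_id : forall a (h : leP a a) x, pmap h x = x;
  pmap_comp : forall a b c (hab : leP a b) (hbc : leP b c) (hac : leP a c) x,
      pmap hac x = pmap hbc (pmap hab x)
}.
Arguments pobj {K R n} p a.
Arguments pmap {K R n} p {a b} h x.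
Arguments pmap_lin {K R n} p {a b} h.
Arguments pmap_id {K R n} p {a} h x.
Arguments pmap_comp {K R n} p {a b c} hab hbc hac x.

Record pmorph (K : fieldType) (R : realType) (n : nat) (M N : pmod K R n) := PMorph {
  pmf : forall a, pobj M a -> pobj N a;
  pmf_lin : forall p, linear (@pmf p);
  pmf_nat : forall p q (h : leP p q) x, @pmf q (pmap M h x) = pmap N h (@pmf p x)
}.
Arguments pmf {K R n M N} p0 a _.
Arguments pmf_lin {K R n M N} p0 p.

Section Simp.
Variables (K : fieldType) (R : realType) (n : nat) (e : R) (he : 0 <= e).

(* S_e(M)_a = Im (M_a -> M_{a + e 1}) *)
Definition Sobj_at (M : pmod K R n) (a : 'I_n -> R) : lmodType K :=
  imT (pmap_lin M (leP_sh a he)).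

Lemma Smap_subproof (M : pmod K R n) a b (h : leP a b) (y : Sobj_at M a) :
  imp (pmap M (leP_sh b he)) (pmap M (leP_shsh e h) (val y)).
Proof.
case: y => /= y /asboolP[x <-]; apply/asboolP; exists (pmap M h x).
have hac : leP a (sh e b).
  by apply/forallP => i; apply: le_trans (forallP h i) _; rewrite /sh lerDl.
by rewrite -!(pmap_comp M _ _ hac).
Qed.

Definition Smap (M : pmod K R n) a b (h : leP a b) (y : Sobj_at M a) : Sobj_at M b :=
  exist _ (pmap M (leP_shsh e h) (val y)) (Smap_subproof h y).
Arguments Smap M {a b} h y.

Lemma Smap_lin (M : pmod K R n) a b (h : leP a b) : linear (Smap M h).
Proof.
move=> k y z; apply: val_inj => /=.
by rewrite (pmap_lin M (leP_shsh e h)).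
Qed.

Lemma Smap_id (M : pmod K R n) a (h : leP a a) y : Smap M h y = y.
Proof. by apply: val_inj => /=; rewrite pmap_id. Qed.

Lemma Smap_comp (M : pmod K R n) a b c (hab : leP a b) (hbc : leP b c)
  (hac : leP a c) y : Smap M hac y = Smap M hbc (Smap M hab y).
Proof. by apply: val_inj => /=; rewrite (pmap_comp M (leP_shsh e hab) (leP_shsh e hbc)). Qed.

Definition Sobj (M : pmod K R n) : pmod K R n :=
  @PMod K R n (Sobj_at M) (@Smap M) (@Smap_lin M) (@Smap_id M) (@Smap_comp M).

Lemma Smor_subproof (M N : pmod K R n) (phi : pmorph M N) a (y : Sobj_at M a) :
  imp (pmap N (leP_sh a he)) (pmf phi (sh e a) (val y)).
Proof.
case: y => /= y /asboolP[x <-]; apply/asboolP; exists (pmf phi a x).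
by rewrite pmf_nat.
Qed.

Definition Smor_at (M N : pmod K R n) (phi : pmorph M N) a (y : Sobj_at M a) :
  Sobj_at N a := exist _ (pmf phi (sh e a) (val y)) (Smor_subproof phi y).

Lemma Smor_lin (M N : pmod K R n) (phi : pmorph M N) a : linear (@Smor_at M N phi a).
Proof. by move=> k y z; apply: val_inj => /=; rewrite (pmf_lin phi). Qed.

Lemma Smor_nat (M N : pmod K R n) (phi : pmorph M N) a b (h : leP a b) y :
  Smor_at phi (Smap M h y) = Smap N h (Smor_at phi y).
Proof. by apply: val_inj => /=; rewrite pmf_nat. Qed.

Definition Smor (M N : pmod K R n) (phi : pmorph M N) : pmorph (Sobj M) (Sobj N) :=
  @PMorph K R n (Sobj M) (Sobj N) (@Smor_at M N phi) (@Smor_lin M N phi)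
    (@Smor_nat M N phi).

End Simp.

Definition interleaved (K : fieldType) (R : realType) (n : nat)
    (M N : pmod K R n) (e : R) : Prop :=
  0 <= e /\
  exists (f : forall a, pobj M a -> pobj N (sh e a))
         (g : forall a, pobj N a -> pobj M (sh e a)),
    [/\ (forall a, linear (f a)) /\ (forall a, linear (g a)),
        (forall a b (h : leP a b) (h' : leP (sh e a) (sh e b)) x,
            f b (pmap M h x) = pmap N h' (f a x)),
        (forall a b (h : leP a b) (h' : leP (sh e a) (sh e b)) x,
            g b (pmap N h x) = pmap M h' (g a x)),
        (forall a (h : leP a (sh e (sh e a))) x, g (sh e a) (f a x) = pmap M h x) &
        (forall a (h : leP a (sh e (sh e a))) x, f (sh e a) (g a x) = pmap N h x)].

Definition dI (K : fieldType) (R : realType) (n : nat) (M N : pmod K R n) : \bar R :=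
  ereal_inf [set (e%:E)%E | e in [set e | interleaved M N e]].

From Pilot Require Import Defs.
From HB Require Import structures.
From mathcomp Require Import all_boot all_order all_algebra.
From mathcomp Require Import boolp classical_sets reals constructive_ereal ereal.
Import Order.TTheory GRing.Theory Num.Theory.
Set Implicit Arguments. Unset Strict Implicit.
Local Open Scope ring_scope.

(* S_e acts on a morphism phi by restricting phi_(a + e1) to the image of
   M_a -> M_(a + e1), so functoriality is inherited pointwise from that of
   composition.  An e-interleaving of M and S_e(M) consists of the inclusions
   S_e(M)_a ⊆ M_(a + e1) and of the maps x |-> M(a <= a + 2e1) x, which land in
   S_e(M)_(a + e1) = Im (M_(a + e1) -> M_(a + 2e1)) because M(a <= a + 2e1)
   factors through M_(a + e1); both composites are internal maps of M. *)

Lemma leP_trans (R : realType) (n : nat) (a b c : 'I_n -> R) :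
  Defs.leP a b -> Defs.leP b c -> Defs.leP a c.
Proof.
by move=> /forallP hab /forallP hbc; apply/forallP => i; exact: le_trans (hab i) (hbc i).
Qed.

Section PersistenceModule.
Variables (K : fieldType) (R : realType) (n : nat) (M : pmod K R n).

Lemma pmap_irr a b (h1 h2 : Defs.leP a b) x : Defs.pmap M h1 x = Defs.pmap M h2 x.
Proof. by rewrite (bool_irrelevance h1 h2). Qed.

Lemma pmap_pmap a b c (hab : Defs.leP a b) (hbc : Defs.leP b c) x :
  Defs.pmap M hbc (Defs.pmap M hab x) = Defs.pmap M (leP_trans hab hbc) x.
Proof. by rewrite (pmap_comp M hab hbc). Qed.

End PersistenceModule.

Section Simplification.
Variables (K : fieldType) (R : realType) (n : nat) (e : R) (he : 0 <= e).

Lemma Smor_id (M : pmod K R n) (phi : pmorph M M) :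
  (forall a x, pmf phi a x = x) -> forall a y, pmf (Smor he phi) a y = y.
Proof. by move=> phi_id a y; apply: val_inj => /=; rewrite phi_id. Qed.

Lemma Smor_comp (M N P : pmod K R n) (phi : pmorph M N) (psi : pmorph N P)
    (chi : pmorph M P) :
  (forall a x, pmf chi a x = pmf psi a (pmf phi a x)) ->
  forall a y, pmf (Smor he chi) a y = pmf (Smor he psi) a (pmf (Smor he phi) a y).
Proof. by move=> chiE a y; apply: val_inj => /=; rewrite chiE. Qed.

Variable M : pmod K R n.

Definition to_Sobj a (x : pobj M a) : pobj (Sobj he M) (sh e a) :=
  exist (imp (Defs.pmap M (leP_sh (sh e a) he))) _
    (introT (asboolP _) (ex_intro _ (Defs.pmap M (leP_sh a he) x) erefl)).

Definition of_Sobj a (y : pobj (Sobj he M) a) : pobj M (sh e a) := val y.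

Lemma to_Sobj_lin a : linear (@to_Sobj a).
Proof. by move=> k x y; apply: val_inj => /=; rewrite !(pmap_lin M). Qed.

Lemma of_Sobj_lin a : linear (@of_Sobj a).
Proof. by move=> k [x hx] [y hy]. Qed.

Lemma interleaved_Sobj : interleaved M (Sobj he M) e.
Proof.
split=> //; exists to_Sobj, of_Sobj; split.
- by split; [exact: to_Sobj_lin | exact: of_Sobj_lin].
- by move=> a b h h' x; apply: val_inj; rewrite /= !pmap_pmap; exact: pmap_irr.
- by move=> a b h h' x; exact: pmap_irr.
- by move=> a h x; rewrite /of_Sobj /= pmap_pmap; exact: pmap_irr.
- by move=> a h x; apply: val_inj; rewrite /= pmap_pmap; apply: pmap_irr.
Qed.

End Simplification.

Theorem mainTheorem9 (K : fieldType) (R : realType) (n : nat) (e : R) (he : 0 <= e) :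
  (* S_e preserves identities *)
  (forall (M : pmod K R n) (phi : pmorph M M),
      (forall a x, pmf phi a x = x) ->
      forall a y, pmf (Smor he phi) a y = y) /\
  (* S_e preserves composition *)
  (forall (M N P : pmod K R n) (phi : pmorph M N) (psi : pmorph N P)
          (chi : pmorph M P),
      (forall a x, pmf chi a x = pmf psi a (pmf phi a x)) ->
      forall a y, pmf (Smor he chi) a y = pmf (Smor he psi) a (pmf (Smor he phi) a y)) /\
  (* d_I(M, S_e(M)) <= e *)
  (forall M : pmod K R n, (dI M (Sobj he M) <= e%:E)%E).
Proof.
split; [exact: Smor_id | split; first exact: Smor_comp].
by move=> M; apply: ereal_inf_lbound; exists e; first exact: interleaved_Sobj.
Qed.
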